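(* Let $\{C_i\}_{i\in\Gamma}$ be a family of compact Hausdorff spaces, $X=\bigsqcup_{i\in\Gamma}C_i$ their topological coproduct, $\pi:X\to\Gamma$ with $\pi(C_i)=\{i\}$, and $\varepsilon=\{e\subseteq X\times X:\exists f\subseteq\Gamma\times\Gamma \text{ with } f\setminus\Delta\Gamma \text{ finite and } e\subseteq(\pi\times\pi)^{-1}(f)\}$. Let $X+_fY$ be a Hausdorff compact space with $Y$ compact Hausdorff and $f$ admissible, and let $\sim$ be the equivalence relation on $X+_fY$ given by $\sim\ =\Delta(X+_fY)\cup\bigcup_{i\in\Gamma}C_i\times C_i$. Then $X+_fY\in\mathrm{Pers}(\varepsilon)$ if and only if the quotient $(X+_fY)/\!\sim$ is Hausdorff.
   Context: Artin–Wraith glueing: $\mathrm{Closed}(A)$ is the set of closed subsets of $A$; $f:\mathrm{Closed}(A)\to\mathrm{Closed}(B)$ is admissible if $f(\emptyset)=\emptyset$ and $f$ preserves finite unions; $A+_fB$ is $A\sqcup B$ with closed sets the $D$ such that $D\cap A$ is closed in $A$, $D\cap B$ closed in $B$ and $f(D\cap A)\subseteq D$. $\mathrm{Comp}(X)$ is the category of compact spaces $X+_fW$ with $W$ compact Hausdorff, morphisms continuous maps which are the identity on $X$. For a Hausdorff compactification $X+_fW$ of $X$ ($X$ dense), $e\subseteq X\times X$ is perspective if $\mathrm{Cl}_{(X+_fW)^2}(e)\cap((X+_fW)^2-X^2)\subseteq\{(p,p):p\in W\}$; $\varepsilon_f$ is the set of perspective sets; the compactification is perspective if $\varepsilon\subseteq\varepsilon_f$;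 $\mathrm{Pers}(\varepsilon)$ is the full subcategory of $\mathrm{Comp}(X)$ of perspective compactifications. *)

From HB Require Import structures.
From mathcomp Require Import all_boot all_algebra generic_quotient.
From mathcomp Require Import all_classical topology sigT_topology quotient_topology.
Set Implicit Arguments. Unset Strict Implicit. Unset Printing Implicit Defensive.
Local Open Scope classical_set_scope.
Local Open Scope quotient_scope.

Section Gluing.
Context {Gamma : choiceType} (C : Gamma -> topologicalType) (Y : topologicalType).

Definition Xsp := {i : Gamma & C i}.

Definition admissible (f : set Xsp -> set Y) : Prop :=
  [/\ (forall D, closed D -> closed (f D)),
      f set0 = set0 &
      (forall D E, closed D -> closed E -> f (D `|` E) = f D `|` f E)].

Definition glued_closed (f : set Xsp -> set Y) (D : set (Xsp + Y)) : Prop :=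
  [/\ closed (inl @^-1` D), closed (inr @^-1` D) & f (inl @^-1` D) `<=` inr @^-1` D].

Variables (f : set Xsp -> set Y) (hf : admissible f).

Definition glued (h : admissible f) : Type := (Xsp + Y)%type.
HB.instance Definition _ := Choice.on (glued hf).

Definition glued_open (U : set (glued hf)) := glued_closed f (~` U).

Lemma adm_mono (A B : set Xsp) : closed A -> closed B -> A `<=` B -> f A `<=` f B.
Proof.
have [_ _ hU] := hf; move=> cA cB AB; have -> : B = A `|` B by rewrite setUidr.
by rewrite hU //; apply: subsetUl.
Qed.

Lemma glued_openT : glued_open setT.
Proof.
have [_ h0 _] := hf; rewrite /glued_open setCT /glued_closed !preimage_set0 h0.
by split => //; exact: closed0.
Qed.

Lemma glued_openI (A B : set (glued hf)) : glued_open A -> glued_open B -> glued_open (A `&` B).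
Proof.
have [_ _ hU] := hf; move=> [cA1 cA2 fA] [cB1 cB2 fB]; rewrite /glued_open setCI.
split; rewrite ?preimage_setU; try exact: closedU.
by rewrite hU // => y [/fA|/fB]; [left|right].
Qed.

Lemma glued_open_bigcup (I : Type) (F : I -> set (glued hf)) :
  (forall i, glued_open (F i)) -> glued_open (\bigcup_i F i).
Proof.
move=> oF; rewrite /glued_open setC_bigcup.
have c1 : closed (inl @^-1` \bigcap_i ~` F i).
  by rewrite preimage_bigcap; apply: closed_bigI => i _; case: (oF i).
split => //.
  by rewrite preimage_bigcap; apply: closed_bigI => i _; case: (oF i).
move=> y fy; rewrite preimage_bigcap => i _.
case: (oF i) => ci _ fi; apply: fi; apply: (adm_mono c1 ci) fy.
by move=> x /= H; exact: H.
Qed.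

HB.instance Definition _ := isOpenTopological.Build (glued hf)
  glued_openT glued_openI glued_open_bigcup.

Definition simR (a b : glued hf) : Prop :=
  a = b \/ exists i (x y : C i), a = inl (existT _ i x) /\ b = inl (existT _ i y).

Definition simb (a b : glued hf) : bool := `[< simR a b >].

Lemma simb_refl : reflexive simb.
Proof. by move=> a; apply/asboolP; left. Qed.

Lemma simb_sym : symmetric simb.
Proof.
have H a b : simb a b -> simb b a.
  move=> /asboolP [->|[i [x [y [-> ->]]]]]; apply/asboolP; first by left.
  by right; exists i, y, x.
by move=> a b; apply/idP/idP; apply: H.
Qed.

Lemma simb_trans : transitive simb.
Proof.
move=> b a c /asboolP [<-//|[i [x [y [-> ->]]]]] /asboolP [<-|[j [u [v [E ->]]]]].
  by apply/asboolP; right; exists i, x, y.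
case: E => Eij; subst j => _; apply/asboolP; right; exists i, x, v; split => //.
Qed.

Definition simE : equiv_rel (glued hf) := EquivRel simb simb_refl simb_sym simb_trans.

Definition glued_quot := quotient_topology {eq_quot simE}.

Definition perspective (e : set (Xsp * Xsp)) : Prop :=
  closure ((fun p : Xsp * Xsp => ((inl p.1 : glued hf), (inl p.2 : glued hf))) @` e)
    `&` ~` [set p : glued hf * glued hf | exists a b, p = (inl a, inl b)]
  `<=` [set p : glued hf * glued hf | exists y, p = (inr y, inr y)].

Definition eps_f : set (set (Xsp * Xsp)) := perspective.

End Gluing.

Definition eps_coprod {Gamma : choiceType} (C : Gamma -> topologicalType)
  : set (set (Xsp C * Xsp C)) :=
  [set e | exists F : set (Gamma * Gamma),
     finite_set (F `\` [set p | p.1 = p.2]) /\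
     e `<=` [set p | F (projT1 p.1, projT1 p.2)]].

Definition in_Pers {Gamma : choiceType} (C : Gamma -> topologicalType) (Y : topologicalType)
  (f : set (Xsp C) -> set Y) (hf : admissible f) (eps : set (set (Xsp C * Xsp C))) : Prop :=
  eps `<=` eps_f hf.

Arguments glued {Gamma C Y f} h.
Arguments glued_quot {Gamma C Y f} hf.
Arguments eps_f {Gamma C Y f} hf.
Arguments in_Pers {Gamma C Y f} hf eps.
Arguments admissible {Gamma C Y} f.
Arguments eps_coprod {Gamma} C.

From HB Require Import structures.
From mathcomp Require Import all_boot all_algebra generic_quotient.
From mathcomp Require Import all_classical topology sigT_topology quotient_topology.
Local Open Scope classical_set_scope.
Local Open Scope quotient_scope.

(* Each summand C_i is open in X +_f Y, and closed there because it is compact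
   and X +_f Y is Hausdorff.  Saturating and pushing forward shows that the
   quotient by ~ is Hausdorff iff any two inequivalent points have open
   neighbourhoods U, V with no point of U equivalent to a point of V.  A summand
   and its complement separate all inequivalent pairs except pairs of distinct
   points of Y, and separating those is exactly the perspectivity of
   the union of the C_i x C_i, an element of epsilon.  Conversely, an e in
   epsilon meets only finitely many C_i x C_j with i <> j; their union is
   closed, so a limit point of e outside X x X has neighbourhoods seeing e only
   inside the C_i x C_i, whence its coordinates are equivalent and, not lying
   both in X, equal points of Y. *)

Lemma not_closure_setX (T U : topologicalType) (A : set (T * U)) a b :
  ~ closure A (a, b) -> exists O1 O2, [/\ open O1, open O2, O1 a, O2 b &
    A `&` (O1 `*` O2) = set0].
Proof.
move=> /existsNP [B /not_implyP [[[P1 P2] /= [P1a P2b] PB] AB0]].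
move: P1a P2b; rewrite !nbhsE => -[O1 [oO1 O1a] O1P] [O2 [oO2 O2b] O2P].
exists O1, O2; split=> //; apply/seteqP; split=> // -[x y] [Axy [O1x O2y]].
apply: AB0; exists (x, y); split=> //.
by apply: PB; split; [exact: O1P|exact: O2P].
Qed.

Section PerspectiveCoproduct.
Context {Gamma : choiceType} (C : Gamma -> topologicalType) (Y : topologicalType).
Context (f : set (Xsp C) -> set Y) (hf : admissible f).
Local Notation Z := (glued hf).
Local Notation Q := (glued_quot hf).

Definition label (z : Z) : option Gamma :=
  if z is inl s then Some (projT1 s) else None.

Definition summand (i : Gamma) : set Z := [set z | label z = Some i].

Definition inj_summand (i : Gamma) (x : C i) : Z := inl (existT _ i x).

Lemma open_summand i : open (summand i).
Proof.
split=> //=.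
have -> : inl @^-1` (~` summand i) = ~` (existT _ i @` [set: C i]).
  apply/seteqP; split=> [[j x] /= nij [y _ [eij _]]|[j x] /= nix [eji]].
    by apply: nij; rewrite eij.
  by subst j; apply: nix; exists x.
by rewrite closedC; apply: existT_open_map; exact: openT.
Qed.

Lemma continuous_inj_summand i : continuous (@inj_summand i).
Proof.
apply/continuousP => U [cU _ _]; rewrite preimage_setC closedC in cU.
exact: (sigT_openP _).1 cU i.
Qed.

Lemma closed_summand i :
  compact [set: C i] -> hausdorff_space Z -> closed (summand i).
Proof.
move=> cCi hZ; apply: compact_closed => //.
have -> : summand i = @inj_summand i @` [set: C i].
  apply/seteqP; split=> [[[j x]|y] //= [eji]|z [x _ <-] //].
  by subst j; exists x.
apply: continuous_compact => //.
exact/continuous_subspaceT/continuous_inj_summand.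
Qed.

Lemma simRP (a b : Z) :
  simR a b <-> a = b \/ (label a = label b /\ label a <> None).
Proof.
split=> [[->|[i [x [y [-> ->]]]]]|[->|[]]]; [by left|by right|by left|].
case: a => [[i x]|a]; case: b => [[j y]|b] //= [eij] _; subst j.
by right; exists i, x, y.
Qed.

Lemma simR_sym (a b : Z) : simR a b -> simR b a.
Proof. by move=> /asboolP ab; apply/asboolP; rewrite -/(simb b a) simb_sym. Qed.

Lemma simR_trans (a b c : Z) : simR a b -> simR b c -> simR a c.
Proof.
by move=> /asboolP ab /asboolP bc; apply/asboolP; exact: simb_trans ab bc.
Qed.

Lemma pi_glued_eqP (a b : Z) : \pi_Q a = \pi_Q b <-> simR a b.
Proof. by split=> [/eqmodP/asboolP //|ab]; apply/eqmodP; exact/asboolP. Qed.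

Definition saturation (U : set Z) : set Z := [set z | exists2 u, U u & simR u z].

Lemma sub_saturation U : U `<=` saturation U.
Proof. by move=> u Uu; exists u => //; left. Qed.

Lemma open_saturation U : open U -> open (saturation U).
Proof.
move=> oU; rewrite openE => z [u Uu /simRP [<-|[luz nlu]]].
  exact: filterS (@sub_saturation U) (open_nbhs_nbhs (conj oU Uu)).
case lz : (label z) luz nlu => [i|] luz nlu; last by rewrite luz in nlu.
apply: filterS (open_nbhs_nbhs (conj (open_summand i) lz)) => v lv.
by exists u => //; apply/simRP; right; rewrite luz lv.
Qed.

Lemma open_pi_saturation U : open U -> open (\pi_Q @` saturation U).
Proof.
move=> oU; change (open (\pi_Q @^-1` (\pi_Q @` saturation U) : set Z)).
have -> : \pi_Q @^-1` (\pi_Q @` saturation U) = saturation U.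
  apply/seteqP; split=> [z [w [u Uu uw] /pi_glued_eqP wz]|z Uz]; last by exists z.
  by exists u => //; exact: simR_trans wz.
exact: open_saturation.
Qed.

Definition sim_separated (a b : Z) : Prop := exists U V : set Z,
  [/\ open U, open V, U a, V b & forall u v, U u -> V v -> ~ simR u v].

Lemma sim_separated_sym a b : sim_separated a b -> sim_separated b a.
Proof.
move=> [U [V [oU oV Ua Vb UV]]]; exists V, U; split=> // v u Vv Uu /simR_sym.
exact: UV.
Qed.

Lemma hausdorff_glued_quotP :
  hausdorff_space Q <-> forall a b : Z, ~ simR a b -> sim_separated a b.
Proof.
rewrite open_hausdorff; split=> [hQ a b nab|sepZ x y].
  have /hQ [[A B] /=] : \pi_Q a != \pi_Q b by apply/eqP => /pi_glued_eqP.
  rewrite !inE => -[Aa Bb] [oA oB AB0].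
  exists (\pi_Q @^-1` A), (\pi_Q @^-1` B); split=> // u v Au Bv /pi_glued_eqP uv.
  suff : (A `&` B) (\pi_Q v) by rewrite AB0.
  by split=> //; rewrite -uv.
rewrite -(reprK x) -(reprK y) => /eqP xy.
have [|U [V [oU oV Ux Vy UV]]] := sepZ (repr x) (repr y).
  by move=> /pi_glued_eqP.
exists (\pi_Q @` saturation U, \pi_Q @` saturation V) => /=.
  by rewrite !inE; split; [exists (repr x)|exists (repr y)] => //;
    exact: sub_saturation.
split; [exact: open_pi_saturation|exact: open_pi_saturation|].
apply/eqP/seteqP; split=> // _ [[u' [u Uu uu'] <-]].
move=> [v' [v Vv vv'] /pi_glued_eqP v'u'].
apply: (UV u v Uu Vv); apply: simR_trans uu' _.
by apply: simR_sym; exact: simR_trans vv' v'u'.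
Qed.

Lemma summand_separated s b : compact [set: C (projT1 s)] -> hausdorff_space Z ->
  label b <> Some (projT1 s) -> sim_separated (inl s) b.
Proof.
move=> cCs hZ lb; exists (summand (projT1 s)), (~` summand (projT1 s)).
split=> //; first exact: open_summand.
  by rewrite openC; exact: closed_summand.
by move=> u v lu nv /simRP [uv|[luv _]]; apply: nv; rewrite /summand/= -?uv -?luv.
Qed.

Definition inl2 (p : Xsp C * Xsp C) : Z * Z := (inl p.1, inl p.2).

Definition same_summand : set (Xsp C * Xsp C) :=
  [set p | projT1 p.1 = projT1 p.2].

Lemma eps_same_summand : eps_coprod C same_summand.
Proof.
by exists [set p | p.1 = p.2]; split=> //; rewrite setDv; exact: finite_set0.
Qed.

Lemma perspective_separated y1 y2 : hausdorff_space Z ->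
  eps_f hf same_summand -> y1 != y2 -> sim_separated (inr y1) (inr y2).
Proof.
move=> hZ pers y12.
have [|O1 [O2 [oO1 oO2 O1y O2y O0]]] :=
    @not_closure_setX _ _ (inl2 @` same_summand) (inr y1) (inr y2).
  move=> cl; have [|y [e1 e2]] := pers (inr y1, inr y2).
    by split=> // -[a [b []]].
  by move: y12; rewrite e1 e2 eqxx.
move: hZ; rewrite open_hausdorff => /(_ (inr y1) (inr y2)) [|[W1 W2] /=].
  by apply: contra_neq y12 => -[].
rewrite !inE => -[W1y W2y] [oW1 oW2 W12].
exists (O1 `&` W1), (O2 `&` W2); split=> //; try exact: openI.
move=> u v [O1u W1u] [O2v W2v] /simRP [uv|[luv nlu]].
  by subst v; suff : (W1 `&` W2) u by rewrite W12.
case: u luv nlu O1u {W1u} => [s|y] luv nlu O1s; last by case: nlu.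
case: v luv O2v {W2v} => [t|y] //= [st] O2t.
have : (inl2 @` same_summand `&` O1 `*` O2) (inl s, inl t).
  by split; [exists (s, t)|].
by rewrite O0.
Qed.

Lemma eps_closure_not_separated e (p q : Z) :
  (forall i, compact [set: C i]) -> hausdorff_space Z -> eps_coprod C e ->
  closure (inl2 @` e) (p, q) -> ~ (exists a b, (p, q) = (inl a, inl b)) ->
  ~ sim_separated p q.
Proof.
move=> cC hZ [F [finD eF]] cl nX [U [V [oU oV Up Vq UV]]].
set D := F `\` _ in finD.
pose K := \bigcup_(k in D) (summand k.1 `|` summand k.2).
have cK : closed K.
  by apply: closed_bigcup => // k _; apply: closedU; exact: closed_summand.
pose away (z : Z) := if z is inr _ then ~` K else setT.
have nbhs_away z : nbhs z (away z).
  case: z => [s|y] /=; first exact: filterT.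
  by apply: open_nbhs_nbhs; split; [rewrite openC|move=> [k _ []]].
have [|_ [[[s t] est <-] /= [[Us As] [Vt At]]]] :=
  cl ((U `&` away p) `*` (V `&` away q)).
  exists (U `&` away p, V `&` away q) => //.
  by split; apply: filterI => //; exact: open_nbhs_nbhs.
have [st|nst] := pselect (projT1 s = projT1 t).
  by apply: (UV _ _ Us Vt); apply/simRP; right; rewrite /= st.
have Dst : D (projT1 s, projT1 t) by split; [exact: eF est|].
have [Ks Kt] : K (inl s) /\ K (inl t).
  by split; exists (projT1 s, projT1 t) => //=; [left|right].
case: p q nX As At {cl Up Vq} => [a|y] [b|y'] nX As At;
  [by case: nX; exists a, b|exact: At|exact: As|exact: As].
Qed.

Lemma simR_inr_diag (p q : Z) : simR p q ->
  ~ (exists a b, (p, q) = (inl a, inl b)) -> exists y, (p, q) = (inr y, inr y).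
Proof.
case/simRP=> [<-|[lpq nlp]] nX.
  by case: p nX => [a|y] nX; [case: nX; exists a, a|exists y].
by case: p q lpq nlp nX => [a|y] [b|y'] //= _ _ []; exists a, b.
Qed.

Lemma perspective_hausdorff_quot : (forall i, compact [set: C i]) ->
  hausdorff_space Z -> in_Pers hf (eps_coprod C) -> hausdorff_space Q.
Proof.
move=> cC hZ pers; apply/hausdorff_glued_quotP => -[s|y1] [t|y2] nst.
- apply: summand_separated => // -[st]; apply: nst.
  by apply/simRP; right; rewrite /= st.
- exact: summand_separated.
- exact/sim_separated_sym/summand_separated.
- apply: perspective_separated => //; first exact: pers _ eps_same_summand.
  by apply/eqP => y12; apply: nst; left; rewrite y12.
Qed.

Lemma hausdorff_quot_perspective : (forall i, compact [set: C i]) ->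
  hausdorff_space Z -> hausdorff_space Q -> in_Pers hf (eps_coprod C).
Proof.
move=> cC hZ /hausdorff_glued_quotP sepZ e epse [p q] [cl nX].
suff spq : simR p q by exact: simR_inr_diag spq nX.
apply: contrapT => npq.
exact: eps_closure_not_separated epse cl nX (sepZ _ _ npq).
Qed.

End PerspectiveCoproduct.

Theorem mainTheorem5 (Gamma : choiceType) (C : Gamma -> topologicalType)
  (Y : topologicalType) (f : set (Xsp C) -> set Y) (hf : admissible f) :
  (forall i, compact [set: C i]) -> (forall i, hausdorff_space (C i)) ->
  compact [set: Y] -> hausdorff_space Y ->
  compact [set: glued hf] -> hausdorff_space (glued hf) ->
  (in_Pers hf (eps_coprod C) <-> hausdorff_space (glued_quot hf)).
Proof.
move=> cC _ _ _ _ hZ; split.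
  exact: perspective_hausdorff_quot.
exact: hausdorff_quot_perspective.
Qed.
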